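(* Let $K$ be the $2$-uniform tiling of the plane whose vertex types are $[3^2,4^1,3^1,4^1]$ and $[3^1,4^1,6^1,4^1]$. If $X$ is a map on the torus that is a quotient $X=K/\Gamma$ of $K$, then the vertices of $X$ form at most $6$ orbits under ${\rm Aut}(X)$.
   Context: A map is a polyhedral map: a cellular embedding of a connected graph in a closed surface such that the intersection of any two distinct faces is empty, a single vertex, or a single edge. For a vertex $u$, the faces containing $u$ form a cyclic sequence (the face-cycle at $u$); if this cyclic sequence consists of consecutive blocks of $n_1$ $p_1$-gons, then $n_2$ $p_2$-gons, ..., then $n_k$ $p_k$-gons, with cyclically consecutive $p_i$ distinct, then $u$ is said to have type $[p_1^{n_1},\dots,p_k^{n_k}]$ (defined up to cyclic shift and reversal). A $2$-uniform tiling is an edge-to-edge tiling of the Euclidean plane $\mathbb{R}^2$ by regular polygons whose symmetry group has exactly two orbits on the set of vertices; viewed as a map on the plane, its vertices have (at most) two types, listed as $[W;Z]$. (Up to isomorphism there are exactly $20$ such tilings; there is exactly one with the vertex types named in the claim.) For a map $K$ on the plane, a quotient of $K$ on the torus is a map $X$ on the torus together with a polyhedral covering map $\eta:K\to X$ with $X=K/\Gamma$, where $\Gamma\le {\rm Aut}(K)$ is a subgroup acting without fixed vertices, edges or faces and $K/\Gamma$ is homeomorphic to the torus. ${\rm Aut}(X)$ denotes the automorphism group of the map $X$, acting on its vertex set $V(X)$. *)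

From HB Require Import structures.
From mathcomp Require Import all_boot all_order all_fingroup all_algebra.
From Stdlib Require Import Relations.
Set Implicit Arguments.
Unset Strict Implicit.
Unset Printing Implicit Defensive.

(*  Maps are encoded combinatorially by their flag systems: a set of flags    *)
(*  Phi with three involutions r0 (change vertex, keep edge & face),          *)
(*  r1 (change edge, keep vertex & face), r2 (change face, keep vertex &      *)
(*  edge).  Vertices = <r1,r2>-orbits, edges = <r0,r2>-orbits,                 *)
(*  faces = <r0,r1>-orbits of flags.                                          *)

(*  Geometrically: the 3.12.12 tiling in which every regular 12-gon is        *)
(*  dissected into a central hexagon, 6 squares and 6 triangles; the          *)
(*  12-gons centred at the lattice Z v1 + Z v2 share edges, and the           *)
(*  remaining gaps are triangles.  One fundamental cell: 12 vertices          *)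
(*  (6 of type 3.4.6.4, 6 of type 3^2.4.3.4), 27 edges, 15 faces              *)
(*  (1 hexagon, 6 squares, 8 triangles), 108 flags.                           *)
(*  A flag of K is (a, b, k): local flag k translated by a v1 + b v2.         *)
(*
(*   Local vertices of the fundamental cell (coordinates in the Euclidean plane,
     with lattice basis v1 = (2+sqrt3, 0), v2 = ((2+sqrt3)/2, (2+sqrt3)sqrt3/2)):
       vertex  0 : (1.000000, 0.000000)
       vertex  1 : (0.500000, 0.866025)
       vertex  2 : (-0.500000, 0.866025)
       vertex  3 : (-1.000000, 0.000000)
       vertex  4 : (-0.500000, -0.866025)
       vertex  5 : (0.500000, -0.866025)
       vertex  6 : (1.866025, 0.500000)
       vertex  7 : (0.500000, 1.866025)
       vertex  8 : (-1.366025, 1.366025)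
       vertex  9 : (-1.866025, -0.500000)
       vertex 10 : (-0.500000, -1.866025)
       vertex 11 : (1.366025, -1.366025)
     Faces of the fundamental cell, as cyclic lists of vertices (a,b,i) =
     local vertex i translated by a*v1 + b*v2:
       face  0 (6-gon) : (0,0,0) (0,0,1) (0,0,2) (0,0,3) (0,0,4) (0,0,5)
       face  1 (4-gon) : (0,0,0) (0,0,1) (0,1,10) (0,0,6)
       face  2 (4-gon) : (0,0,1) (0,0,2) (-1,1,11) (0,0,7)
       face  3 (4-gon) : (0,0,2) (0,0,3) (-1,0,6) (0,0,8)
       face  4 (4-gon) : (0,0,3) (0,0,4) (0,-1,7) (0,0,9)
       face  5 (4-gon) : (0,0,4) (0,0,5) (1,-1,8) (0,0,10)
       face  6 (4-gon) : (0,0,5) (0,0,0) (1,0,9) (0,0,11)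
       face  7 (3-gon) : (0,0,0) (0,0,6) (1,0,9)
       face  8 (3-gon) : (0,0,1) (0,0,7) (0,1,10)
       face  9 (3-gon) : (0,0,2) (0,0,8) (-1,1,11)
       face 10 (3-gon) : (0,0,3) (0,0,9) (-1,0,6)
       face 11 (3-gon) : (0,0,4) (0,0,10) (0,-1,7)
       face 12 (3-gon) : (0,0,5) (0,0,11) (1,-1,8)
       face 13 (3-gon) : (0,0,6) (1,0,8) (0,1,10)
       face 14 (3-gon) : (0,0,7) (0,1,9) (-1,1,11)
     Local flags k = 0..107 (face, position i, side s): the flag consists of the
     i-th vertex of the face cycle, the edge from it to the next (s=0) or previous
     (s=1) vertex of the cycle, and the face:
       0:(0,0,0) 1:(0,0,1) 2:(0,1,0) 3:(0,1,1) 4:(0,2,0) 5:(0,2,1) 6:(0,3,0) 7:(0,3,1)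
       8:(0,4,0) 9:(0,4,1) 10:(0,5,0) 11:(0,5,1) 12:(1,0,0) 13:(1,0,1) 14:(1,1,0) 15:(1,1,1)
       16:(1,2,0) 17:(1,2,1) 18:(1,3,0) 19:(1,3,1) 20:(2,0,0) 21:(2,0,1) 22:(2,1,0) 23:(2,1,1)
       24:(2,2,0) 25:(2,2,1) 26:(2,3,0) 27:(2,3,1) 28:(3,0,0) 29:(3,0,1) 30:(3,1,0) 31:(3,1,1)
       32:(3,2,0) 33:(3,2,1) 34:(3,3,0) 35:(3,3,1) 36:(4,0,0) 37:(4,0,1) 38:(4,1,0) 39:(4,1,1)
       40:(4,2,0) 41:(4,2,1) 42:(4,3,0) 43:(4,3,1) 44:(5,0,0) 45:(5,0,1) 46:(5,1,0) 47:(5,1,1)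
       48:(5,2,0) 49:(5,2,1) 50:(5,3,0) 51:(5,3,1) 52:(6,0,0) 53:(6,0,1) 54:(6,1,0) 55:(6,1,1)
       56:(6,2,0) 57:(6,2,1) 58:(6,3,0) 59:(6,3,1) 60:(7,0,0) 61:(7,0,1) 62:(7,1,0) 63:(7,1,1)
       64:(7,2,0) 65:(7,2,1) 66:(8,0,0) 67:(8,0,1) 68:(8,1,0) 69:(8,1,1) 70:(8,2,0) 71:(8,2,1)
       72:(9,0,0) 73:(9,0,1) 74:(9,1,0) 75:(9,1,1) 76:(9,2,0) 77:(9,2,1) 78:(10,0,0) 79:(10,0,1)
       80:(10,1,0) 81:(10,1,1) 82:(10,2,0) 83:(10,2,1) 84:(11,0,0) 85:(11,0,1) 86:(11,1,0) 87:(11,1,1)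
       88:(11,2,0) 89:(11,2,1) 90:(12,0,0) 91:(12,0,1) 92:(12,1,0) 93:(12,1,1) 94:(12,2,0) 95:(12,2,1)
       96:(13,0,0) 97:(13,0,1) 98:(13,1,0) 99:(13,1,1) 100:(13,2,0) 101:(13,2,1) 102:(14,0,0) 103:(14,0,1)
       104:(14,1,0) 105:(14,1,1) 106:(14,2,0) 107:(14,2,1)
*)
*)
(*  Table entries (da, db, k') for r_i applied to local flag k, with the      *)
(*  translation offsets stored shifted by one: (da,db) = (x-1, y-1).          *)

Definition r0tab : seq (nat * nat * nat) :=
[::
  (1, 1, 3); (1, 1, 10); (1, 1, 5); (1, 1, 0); (1, 1, 7); (1, 1, 2);
  (1, 1, 9); (1, 1, 4); (1, 1, 11); (1, 1, 6); (1, 1, 1); (1, 1, 8);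
  (1, 1, 15); (1, 1, 18); (1, 1, 17); (1, 1, 12); (1, 1, 19); (1, 1, 14);
  (1, 1, 13); (1, 1, 16); (1, 1, 23); (1, 1, 26); (1, 1, 25); (1, 1, 20);
  (1, 1, 27); (1, 1, 22); (1, 1, 21); (1, 1, 24); (1, 1, 31); (1, 1, 34);
  (1, 1, 33); (1, 1, 28); (1, 1, 35); (1, 1, 30); (1, 1, 29); (1, 1, 32);
  (1, 1, 39); (1, 1, 42); (1, 1, 41); (1, 1, 36); (1, 1, 43); (1, 1, 38);
  (1, 1, 37); (1, 1, 40); (1, 1, 47); (1, 1, 50); (1, 1, 49); (1, 1, 44);
  (1, 1, 51); (1, 1, 46); (1, 1, 45); (1, 1, 48); (1, 1, 55); (1, 1, 58);
  (1, 1, 57); (1, 1, 52); (1, 1, 59); (1, 1, 54); (1, 1, 53); (1, 1, 56);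
  (1, 1, 63); (1, 1, 64); (1, 1, 65); (1, 1, 60); (1, 1, 61); (1, 1, 62);
  (1, 1, 69); (1, 1, 70); (1, 1, 71); (1, 1, 66); (1, 1, 67); (1, 1, 68);
  (1, 1, 75); (1, 1, 76); (1, 1, 77); (1, 1, 72); (1, 1, 73); (1, 1, 74);
  (1, 1, 81); (1, 1, 82); (1, 1, 83); (1, 1, 78); (1, 1, 79); (1, 1, 80);
  (1, 1, 87); (1, 1, 88); (1, 1, 89); (1, 1, 84); (1, 1, 85); (1, 1, 86);
  (1, 1, 93); (1, 1, 94); (1, 1, 95); (1, 1, 90); (1, 1, 91); (1, 1, 92);
  (1, 1, 99); (1, 1, 100); (1, 1, 101); (1, 1, 96); (1, 1, 97); (1, 1, 98);
  (1, 1, 105); (1, 1, 106); (1, 1, 107); (1, 1, 102); (1, 1, 103); (1, 1, 104) ].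

Definition r1tab : seq (nat * nat * nat) :=
[::
  (1, 1, 1); (1, 1, 0); (1, 1, 3); (1, 1, 2); (1, 1, 5); (1, 1, 4);
  (1, 1, 7); (1, 1, 6); (1, 1, 9); (1, 1, 8); (1, 1, 11); (1, 1, 10);
  (1, 1, 13); (1, 1, 12); (1, 1, 15); (1, 1, 14); (1, 1, 17); (1, 1, 16);
  (1, 1, 19); (1, 1, 18); (1, 1, 21); (1, 1, 20); (1, 1, 23); (1, 1, 22);
  (1, 1, 25); (1, 1, 24); (1, 1, 27); (1, 1, 26); (1, 1, 29); (1, 1, 28);
  (1, 1, 31); (1, 1, 30); (1, 1, 33); (1, 1, 32); (1, 1, 35); (1, 1, 34);
  (1, 1, 37); (1, 1, 36); (1, 1, 39); (1, 1, 38); (1, 1, 41); (1, 1, 40);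
  (1, 1, 43); (1, 1, 42); (1, 1, 45); (1, 1, 44); (1, 1, 47); (1, 1, 46);
  (1, 1, 49); (1, 1, 48); (1, 1, 51); (1, 1, 50); (1, 1, 53); (1, 1, 52);
  (1, 1, 55); (1, 1, 54); (1, 1, 57); (1, 1, 56); (1, 1, 59); (1, 1, 58);
  (1, 1, 61); (1, 1, 60); (1, 1, 63); (1, 1, 62); (1, 1, 65); (1, 1, 64);
  (1, 1, 67); (1, 1, 66); (1, 1, 69); (1, 1, 68); (1, 1, 71); (1, 1, 70);
  (1, 1, 73); (1, 1, 72); (1, 1, 75); (1, 1, 74); (1, 1, 77); (1, 1, 76);
  (1, 1, 79); (1, 1, 78); (1, 1, 81); (1, 1, 80); (1, 1, 83); (1, 1, 82);
  (1, 1, 85); (1, 1, 84); (1, 1, 87); (1, 1, 86); (1, 1, 89); (1, 1, 88);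
  (1, 1, 91); (1, 1, 90); (1, 1, 93); (1, 1, 92); (1, 1, 95); (1, 1, 94);
  (1, 1, 97); (1, 1, 96); (1, 1, 99); (1, 1, 98); (1, 1, 101); (1, 1, 100);
  (1, 1, 103); (1, 1, 102); (1, 1, 105); (1, 1, 104); (1, 1, 107); (1, 1, 106) ].

Definition r2tab : seq (nat * nat * nat) :=
[::
  (1, 1, 12); (1, 1, 55); (1, 1, 20); (1, 1, 15); (1, 1, 28); (1, 1, 23);
  (1, 1, 36); (1, 1, 31); (1, 1, 44); (1, 1, 39); (1, 1, 52); (1, 1, 47);
  (1, 1, 0); (1, 1, 60); (1, 1, 67); (1, 1, 3); (1, 1, 100); (1, 1, 70);
  (1, 1, 63); (1, 1, 97); (1, 1, 2); (1, 1, 66); (1, 1, 73); (1, 1, 5);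
  (1, 1, 106); (1, 1, 76); (1, 1, 69); (1, 1, 103); (1, 1, 4); (1, 1, 72);
  (1, 1, 79); (1, 1, 7); (0, 1, 96); (1, 1, 82); (1, 1, 75); (0, 1, 99);
  (1, 1, 6); (1, 1, 78); (1, 1, 85); (1, 1, 9); (1, 0, 102); (1, 1, 88);
  (1, 1, 81); (1, 0, 105); (1, 1, 8); (1, 1, 84); (1, 1, 91); (1, 1, 11);
  (1, 0, 98); (1, 1, 94); (1, 1, 87); (1, 0, 101); (1, 1, 10); (1, 1, 90);
  (1, 1, 61); (1, 1, 1); (2, 0, 104); (1, 1, 64); (1, 1, 93); (2, 0, 107);
  (1, 1, 13); (1, 1, 54); (2, 1, 83); (1, 1, 18); (1, 1, 57); (2, 1, 80);
  (1, 1, 21); (1, 1, 14); (1, 2, 89); (1, 1, 26); (1, 1, 17); (1, 2, 86);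
  (1, 1, 29); (1, 1, 22); (0, 2, 95); (1, 1, 34); (1, 1, 25); (0, 2, 92);
  (1, 1, 37); (1, 1, 30); (0, 1, 65); (1, 1, 42); (1, 1, 33); (0, 1, 62);
  (1, 1, 45); (1, 1, 38); (1, 0, 71); (1, 1, 50); (1, 1, 41); (1, 0, 68);
  (1, 1, 53); (1, 1, 46); (2, 0, 77); (1, 1, 58); (1, 1, 49); (2, 0, 74);
  (2, 1, 32); (1, 1, 19); (1, 2, 48); (2, 1, 35); (1, 1, 16); (1, 2, 51);
  (1, 2, 40); (1, 1, 27); (0, 2, 56); (1, 2, 43); (1, 1, 24); (0, 2, 59) ].

Definition flagK : Type := (int * int * 'I_108)%type.

Definition apply_tab (t : seq (nat * nat * nat)) (f : flagK) : flagK :=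
  let: (a, b, k) := f in
  let: (x, y, k') := nth (1%N, 1%N, 0%N) t k in
  ((a + x%:Z - 1)%R, (b + y%:Z - 1)%R, inord k').

Definition r0K : flagK -> flagK := apply_tab r0tab.
Definition r1K : flagK -> flagK := apply_tab r1tab.
Definition r2K : flagK -> flagK := apply_tab r2tab.

Definition sameV_K : relation flagK :=
  clos_refl_trans flagK (fun f g => g = r1K f \/ g = r2K f).
Definition sameE_K : relation flagK :=
  clos_refl_trans flagK (fun f g => g = r0K f \/ g = r2K f).
Definition sameF_K : relation flagK :=
  clos_refl_trans flagK (fun f g => g = r0K f \/ g = r1K f).

Definition is_autK (g : flagK -> flagK) : Prop :=
  bijective g /\
  (forall f, g (r0K f) = r0K (g f)) /\
  (forall f, g (r1K f) = r1K (g f)) /\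
  (forall f, g (r2K f) = r2K (g f)).

Definition subgroup_AutK (Gam : (flagK -> flagK) -> Prop) : Prop :=
  (forall g, Gam g -> is_autK g) /\
  Gam id /\
  (forall g h, Gam g -> Gam h -> Gam (g \o h)) /\
  (forall g, Gam g -> exists h, Gam h /\ cancel g h /\ cancel h g).

Definition acts_freely_on (R : relation flagK)
    (Gam : (flagK -> flagK) -> Prop) : Prop :=
  forall g, Gam g -> (exists f, R f (g f)) -> forall h, g h = h.

Record fmap := FMap {
  fl : finType;
  s0 : fl -> fl;
  s1 : fl -> fl;
  s2 : fl -> fl }.

Section FiniteMaps.
Variable X : fmap.

Definition vrel : rel (fl X) := fun x y => (y == s1 x) || (y == s2 x).
Definition erel : rel (fl X) := fun x y => (y == s0 x) || (y == s2 x).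
Definition frel_ : rel (fl X) := fun x y => (y == s0 x) || (y == s1 x).
Definition allrel_ : rel (fl X) :=
  fun x y => [|| y == s0 x, y == s1 x | y == s2 x].

Definition vertex_of (x : fl X) : {set fl X} := [set y | connect vrel x y].
Definition edge_of (x : fl X) : {set fl X} := [set y | connect erel x y].
Definition face_of (x : fl X) : {set fl X} := [set y | connect frel_ x y].

Definition verts : {set {set fl X}} := [set vertex_of x | x : fl X].
Definition edges : {set {set fl X}} := [set edge_of x | x : fl X].
Definition faces : {set {set fl X}} := [set face_of x | x : fl X].

Definition euler_char : int := (#|verts|%:Z - #|edges|%:Z + #|faces|%:Z)%R.

Definition connected_map : Prop := forall x y, connect allrel_ x y.

(* orientable: the flag graph is bipartite *)
Definition orientable : Prop :=
  exists c : fl X -> bool, forall x,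
    [/\ c (s0 x) != c x, c (s1 x) != c x & c (s2 x) != c x].

Definition on_torus : Prop :=
  connected_map /\ orientable /\ euler_char = 0%R.

Definition polyhedral : Prop :=
  forall F1 F2, F1 \in faces -> F2 \in faces -> F1 != F2 ->
  let CV := [set V in verts | (V :&: F1 != set0) && (V :&: F2 != set0)] in
  let CE := [set E in edges | (E :&: F1 != set0) && (E :&: F2 != set0)] in
  [|| (CV == set0) && (CE == set0),
      (#|CV| == 1%N) && (CE == set0)
    | [exists E in CE,
         (CE == [set E]) && (CV == [set V in verts | V :&: E != set0])]].

Definition AutX : {set {perm fl X}} :=
  [set p : {perm fl X} | [forall x,
     [&& p (s0 x) == s0 (p x), p (s1 x) == s1 (p x)
       & p (s2 x) == s2 (p x)]]].

Definition vorbit (V : {set fl X}) : {set {set fl X}} :=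
  [set [set (p : {perm fl X}) x | x in V] | p in AutX].

Definition n_vertex_orbits : nat := #|[set vorbit V | V in verts]|.

End FiniteMaps.

Definition is_quotient_of_K (Gam : (flagK -> flagK) -> Prop) (X : fmap)
    (eta : flagK -> fl X) : Prop :=
  (forall y, exists f, eta f = y) /\
  (forall f, eta (r0K f) = s0 (eta f)) /\
  (forall f, eta (r1K f) = s1 (eta f)) /\
  (forall f, eta (r2K f) = s2 (eta f)) /\
  (forall f g, eta f = eta g <-> exists h, Gam h /\ h f = g).
Arguments is_quotient_of_K : clear implicits.

From mathcomp Require Import all_boot all_order all_fingroup all_algebra.
From mathcomp Require Import zify.
From Stdlib Require Import Relations.

Set Implicit Arguments.
Unset Strict Implicit.
Unset Printing Implicit Defensive.
Import GRing.Theory.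

(* Every element of Gamma is an automorphism of K; it preserves the orientation
   (X is orientable) and maps hexagons to hexagons, so it is a translation
   followed by a rotation about the centre of a hexagon.  A non-trivial rotation
   part always leaves some face or edge invariant, which the freeness of Gamma
   forbids: Gamma is a group of translations.  Hence all translations and the
   half-turn about a hexagon centre normalise Gamma and descend to automorphisms
   of X, and up to these symmetries and the moves around a vertex every flag of K
   is equivalent to one of six flags. *)

Local Open Scope ring_scope.

Definition rK (i : nat) : flagK -> flagK :=
  match i with 0%N => r0K | 1%N => r1K | _ => r2K end.

Fixpoint walk (w : seq nat) (f : flagK) : flagK :=
  if w is i :: w' then walk w' (rK i f) else f.

Definition shift (v : int * int) (f : flagK) : flagK :=
  (f.1.1 + v.1, f.1.2 + v.2, f.2).

Definition local_flag (k : nat) : flagK := (0, 0, inord k).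

Lemma addpairE (u v : int * int) : u + v = (u.1 + v.1, u.2 + v.2).
Proof. by []. Qed.

Lemma opppairE (u : int * int) : - u = (- u.1, - u.2).
Proof. by []. Qed.

Lemma shift0 f : shift (0, 0) f = f.
Proof. by case: f => [[a b] k]; rewrite /shift /= !addr0. Qed.

Lemma shiftD u v f : shift u (shift v f) = shift (v + u) f.
Proof. by rewrite /shift /= !addrA. Qed.

Lemma shiftK v : cancel (shift v) (shift (- v)).
Proof. by case: v => a b [[x y] k]; rewrite /shift /= !addrK. Qed.

Lemma flag_shift_local (f : flagK) : f = shift (f.1.1, f.1.2) (0, 0, f.2).
Proof. by case: f => [[a b] k]; rewrite /shift /= !add0r. Qed.

Lemma shift_apply_tab t v f : shift v (apply_tab t f) = apply_tab t (shift v f).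
Proof.
case: f => [[a b] k]; rewrite /apply_tab /shift /=.
by case: nth => [[x y] k'] /=; congr (_, _, _); lia.
Qed.

Lemma shift_rK i v f : shift v (rK i f) = rK i (shift v f).
Proof. by case: i => [|[|i]]; apply: shift_apply_tab. Qed.

Lemma walk_shift w v f : walk w (shift v f) = shift v (walk w f).
Proof. by elim: w f => [|i w IH] f //=; rewrite -shift_rK IH. Qed.

(* Flags carry an ['I_108] built with [inord], on which [vm_compute] gets stuck;
   all finite checks are therefore run on the codes [(a, b, val k)]. *)
Definition flag_code (f : flagK) : int * int * nat := (f.1.1, f.1.2, val f.2).

Lemma flag_code_inj : injective flag_code.
Proof. by case=> [[a b] k] [[a' b'] k'] [-> -> /val_inj ->]. Qed.

Definition shift_code (v : int * int) (c : int * int * nat) := (c.1.1 + v.1, c.1.2 + v.2, c.2).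

Lemma code_shift v f : flag_code (shift v f) = shift_code v (flag_code f).
Proof. by []. Qed.

Lemma code_local k : (k < 108)%N -> flag_code (local_flag k) = (0, 0, k).
Proof. by move=> lt_k; rewrite /flag_code /= inordK. Qed.

Lemma all_local (P : pred nat) : all P (iota 0 108) -> forall k : 'I_108, P k.
Proof. by move=> /allP HP k; apply: HP; rewrite mem_iota ltn_ord. Qed.

Definition rtab (i : nat) := match i with 0%N => r0tab | 1%N => r1tab | _ => r2tab end.

Definition rK_code (i : nat) (c : int * int * nat) : int * int * nat :=
  let: (x, y, k') := nth (1%N, 1%N, 0%N) (rtab i) c.2 in
  (c.1.1 + x%:Z - 1, c.1.2 + y%:Z - 1, k').

Lemma code_rK i f : flag_code (rK i f) = rK_code i (flag_code f).
Proof.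
have rtab_ok : all (fun k => (nth (1%N, 1%N, 0%N) (rtab i) k).2 < 108)%N (iota 0 108).
  by case: i => [|[|i]]; vm_compute.
have -> : rK i = apply_tab (rtab i) by case: i {rtab_ok} => [|[|i]].
case: f => [[a b] k]; have := all_local rtab_ok k.
by rewrite /apply_tab /rK_code /flag_code /=; case: nth => [[x y] k'] /= lt_k'; rewrite inordK.
Qed.

Fixpoint walk_code (w : seq nat) (c : int * int * nat) : int * int * nat :=
  if w is i :: w' then walk_code w' (rK_code i c) else c.

Lemma code_walk w f : flag_code (walk w f) = walk_code w (flag_code f).
Proof. by elim: w f => [|i w IH] f //=; rewrite IH code_rK. Qed.

Lemma rK_involutive i : involutive (rK i).
Proof.
move=> f; rewrite (flag_shift_local f) -!shift_rK; congr shift.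
apply: flag_code_inj; rewrite !code_rK /=.
have /all_local/(_ f.2)/eqP // :
  all (fun k => rK_code i (rK_code i (0, 0, k)) == (0, 0, k)) (iota 0 108).
by case: i => [|[|i]]; vm_compute.
Qed.

Definition word_east : seq nat := [:: 2; 1; 0; 1; 2; 1; 0; 2; 1; 0; 1; 2; 1; 0; 1; 0].

Definition word_north : seq nat := [:: 0; 2; 1; 0; 1; 2; 1; 0; 2; 1; 0; 1; 2; 1; 0; 1].

Definition local_words : seq (seq nat) :=
[::
  [::]; [:: 1]; [:: 0; 1]; [:: 0]; [:: 0; 1; 0; 1]; [:: 0; 1; 0]; [:: 0; 1; 0; 1; 0; 1];
  [:: 0; 1; 0; 1; 0]; [:: 1; 0; 1; 0]; [:: 1; 0; 1; 0; 1]; [:: 1; 0]; [:: 1; 0; 1]; [:: 2];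
  [:: 2; 1]; [:: 0; 2; 1]; [:: 0; 2]; [:: 0; 2; 1; 0; 1]; [:: 0; 2; 1; 0]; [:: 2; 1; 0];
  [:: 2; 1; 0; 1]; [:: 0; 1; 2]; [:: 0; 1; 2; 1]; [:: 0; 1; 0; 2; 1]; [:: 0; 1; 0; 2];
  [:: 0; 1; 0; 2; 1; 0; 1]; [:: 0; 1; 0; 2; 1; 0]; [:: 0; 1; 2; 1; 0];
  [:: 0; 1; 2; 1; 0; 1]; [:: 0; 1; 0; 1; 2]; [:: 0; 1; 0; 1; 2; 1];
  [:: 0; 1; 0; 1; 0; 2; 1]; [:: 0; 1; 0; 1; 0; 2]; [:: 0; 1; 0; 1; 0; 2; 1; 0; 1];
  [:: 0; 1; 0; 1; 0; 2; 1; 0]; [:: 0; 1; 0; 1; 2; 1; 0]; [:: 0; 1; 0; 1; 2; 1; 0; 1];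
  [:: 0; 1; 0; 1; 0; 1; 2]; [:: 0; 1; 0; 1; 0; 1; 2; 1]; [:: 1; 0; 1; 0; 1; 2; 1];
  [:: 1; 0; 1; 0; 1; 2]; [:: 1; 0; 1; 0; 1; 2; 1; 0; 1]; [:: 1; 0; 1; 0; 1; 2; 1; 0];
  [:: 0; 1; 0; 1; 0; 1; 2; 1; 0]; [:: 0; 1; 0; 1; 0; 1; 2; 1; 0; 1]; [:: 1; 0; 1; 0; 2];
  [:: 1; 0; 1; 0; 2; 1]; [:: 1; 0; 1; 2; 1]; [:: 1; 0; 1; 2]; [:: 1; 0; 1; 2; 1; 0; 1];
  [:: 1; 0; 1; 2; 1; 0]; [:: 1; 0; 1; 0; 2; 1; 0]; [:: 1; 0; 1; 0; 2; 1; 0; 1];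
  [:: 1; 0; 2]; [:: 1; 0; 2; 1]; [:: 1; 2; 1]; [:: 1; 2]; [:: 1; 2; 1; 0; 1];
  [:: 1; 2; 1; 0]; [:: 1; 0; 2; 1; 0]; [:: 1; 0; 2; 1; 0; 1]; [:: 2; 1; 2];
  [:: 1; 2; 1; 2]; [:: 2; 1; 0; 2; 1]; [:: 2; 1; 0; 2]; [:: 1; 2; 1; 0; 2];
  [:: 1; 2; 1; 0; 2; 1]; [:: 0; 1; 2; 1; 2]; [:: 0; 2; 1; 2]; [:: 0; 1; 2; 1; 0; 2; 1];
  [:: 0; 1; 2; 1; 0; 2]; [:: 0; 2; 1; 0; 2]; [:: 0; 2; 1; 0; 2; 1];
  [:: 0; 1; 0; 1; 2; 1; 2]; [:: 0; 1; 0; 2; 1; 2]; [:: 0; 1; 0; 1; 2; 1; 0; 2; 1];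
  [:: 0; 1; 0; 1; 2; 1; 0; 2]; [:: 0; 1; 0; 2; 1; 0; 2]; [:: 0; 1; 0; 2; 1; 0; 2; 1];
  [:: 0; 1; 0; 1; 0; 1; 2; 1; 2]; [:: 0; 1; 0; 1; 0; 2; 1; 2];
  [:: 0; 1; 0; 1; 0; 1; 2; 1; 0; 2; 1]; [:: 0; 1; 0; 1; 0; 1; 2; 1; 0; 2];
  [:: 0; 1; 0; 1; 0; 2; 1; 0; 2]; [:: 0; 1; 0; 1; 0; 2; 1; 0; 2; 1];
  [:: 1; 0; 1; 0; 2; 1; 2]; [:: 1; 0; 1; 0; 1; 2; 1; 2]; [:: 1; 0; 1; 0; 2; 1; 0; 2; 1];
  [:: 1; 0; 1; 0; 2; 1; 0; 2]; [:: 1; 0; 1; 0; 1; 2; 1; 0; 2];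
  [:: 1; 0; 1; 0; 1; 2; 1; 0; 2; 1]; [:: 1; 0; 2; 1; 2]; [:: 1; 0; 1; 2; 1; 2];
  [:: 1; 0; 2; 1; 0; 2; 1]; [:: 1; 0; 2; 1; 0; 2]; [:: 1; 0; 1; 2; 1; 0; 2];
  [:: 1; 0; 1; 2; 1; 0; 2; 1]; [:: 2; 1; 0; 1; 2; 1]; [:: 2; 1; 0; 1; 2];
  [:: 0; 2; 1; 0; 1; 2; 1; 0]; [:: 2; 1; 0; 1; 2; 1; 0]; [:: 0; 2; 1; 0; 1; 2];
  [:: 0; 2; 1; 0; 1; 2; 1]; [:: 0; 1; 2; 1; 0; 1; 2; 1]; [:: 0; 1; 2; 1; 0; 1; 2];
  [:: 0; 1; 0; 2; 1; 0; 1; 2; 1; 0]; [:: 0; 1; 2; 1; 0; 1; 2; 1; 0];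
  [:: 0; 1; 0; 2; 1; 0; 1; 2]; [:: 0; 1; 0; 2; 1; 0; 1; 2; 1] ].

Definition turn (v : int * int) : int * int := (- v.2, v.1 + v.2).

Lemma turnD u v : turn (u + v) = turn u + turn v.
Proof. by rewrite /turn !addpairE /=; congr pair; lia. Qed.

(* The rotation by 60 degrees about the centre of hexagon 0, defined by
   transport: it maps the base flag to local flag 2, hence the end of a walk from
   the base flag to the end of the same walk from flag 2, and it acts on the
   lattice [a v1 + b v2] by [turn] since it maps [v1] to [v2] and [v2] to [v2 - v1]. *)
Definition rot60 (f : flagK) : flagK :=
  shift (turn (f.1.1, f.1.2)) (walk (nth [::] local_words f.2) (local_flag 2)).

Lemma rot60_shift v f : rot60 (shift v f) = shift (turn v) (rot60 f).
Proof. by rewrite /rot60 shiftD -turnD addpairE. Qed.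

Lemma iter_rot60_shift j v f :
  iter j rot60 (shift v f) = shift (iter j turn v) (iter j rot60 f).
Proof. by elim: j v => [|j IH] v //=; rewrite IH rot60_shift. Qed.

Definition rot60_code (c : int * int * nat) : int * int * nat :=
  shift_code (turn (c.1.1, c.1.2)) (walk_code (nth [::] local_words c.2) (0, 0, 2%N)).

Lemma code_rot60 f : flag_code (rot60 f) = rot60_code (flag_code f).
Proof. by rewrite /rot60 code_shift code_walk code_local. Qed.

Lemma code_iter_rot60 j f : flag_code (iter j rot60 f) = iter j rot60_code (flag_code f).
Proof. by elim: j => [|j IH] //=; rewrite code_rot60 IH. Qed.

Ltac flag_compute := apply: flag_code_inj;
  repeat first [rewrite code_walk | rewrite code_iter_rot60 | rewrite code_rot60
               | rewrite code_shift
               | rewrite code_local //]; vm_compute.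

Lemma walk_word_east : walk word_east (local_flag 0) = shift (1, 0) (local_flag 0).
Proof. by flag_compute. Qed.

Lemma walk_word_north : walk word_north (local_flag 0) = shift (0, 1) (local_flag 0).
Proof. by flag_compute. Qed.

Lemma walk_local_word (k : 'I_108) :
  walk (nth [::] local_words k) (local_flag 0) = (0, 0, k).
Proof.
apply: flag_code_inj; rewrite code_walk code_local //.
have /all_local/(_ k)/eqP // :
  all (fun k => walk_code (nth [::] local_words k) (0, 0, 0%N) == (0, 0, k)) (iota 0 108).
by vm_compute.
Qed.

Lemma int_ind_step (Q : int -> Prop) : Q 0 -> (forall z, Q z <-> Q (1 + z)) -> forall z, Q z.
Proof.
move=> Q0 QS; elim/int_ind => [//|n /QS Qn|n Qn].
  by congr Q: Qn; lia.
by apply/QS; congr Q: Qn; lia.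
Qed.

Lemma flagK_ind (P : flagK -> Prop) :
  (forall i f, P f -> P (rK i f)) -> P (local_flag 0) -> forall f, P f.
Proof.
move=> PrK P0.
have Pwalk w f : P f <-> P (walk w f).
  elim: w f => [|i w IH] f //=; rewrite -IH; split; first exact: PrK.
  by move=> /(PrK i); rewrite rK_involutive.
have Pstep w u : walk w (local_flag 0) = shift u (local_flag 0) ->
    forall v, P (shift v (local_flag 0)) <-> P (shift (u + v) (local_flag 0)).
  by move=> Ew v; rewrite (Pwalk w) walk_shift Ew shiftD.
have Pcell a b : P (shift (a, b) (local_flag 0)).
  elim/int_ind_step: a b => [b|a].
    elim/int_ind_step: b => [|b]; first by rewrite shift0.
    by rewrite (Pstep _ _ walk_word_north) addpairE /= add0r.
  have Pa_iff b : P (shift (a, b) (local_flag 0)) <-> P (shift (1 + a, b) (local_flag 0)).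
    by rewrite (Pstep _ _ walk_word_east) addpairE /= add0r.
  by split=> Pa b; apply/Pa_iff; apply: Pa.
case=> [[a b] k]; rewrite (flag_shift_local (a, b, k)) -walk_local_word.
by rewrite -walk_shift -Pwalk.
Qed.

Definition rK_commuting (g : flagK -> flagK) := forall i f, g (rK i f) = rK i (g f).

Lemma autK_rK_commuting g : is_autK g -> rK_commuting g.
Proof. by case=> _ [g0 [g1 g2]] [|[|i]] f /=. Qed.

Lemma rK_commuting_eq g h : rK_commuting g -> rK_commuting h ->
  g (local_flag 0) = h (local_flag 0) -> g =1 h.
Proof. by move=> gK hK E; apply: flagK_ind => // i f E'; rewrite gK hK E'. Qed.

Lemma shift_rK_commuting v : rK_commuting (shift v).
Proof. by move=> i f; rewrite shift_rK. Qed.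

Lemma rK_commuting_comp g h : rK_commuting g -> rK_commuting h -> rK_commuting (g \o h).
Proof. by move=> gK hK i f /=; rewrite hK gK. Qed.

Lemma rK_commuting_of_local g (L : int * int -> int * int) :
  (forall v f, g (shift v f) = shift (L v) (g f)) ->
  (forall i (k : 'I_108), g (rK i (0, 0, k)) = rK i (g (0, 0, k))) -> rK_commuting g.
Proof.
move=> g_shift g_local i f.
by rewrite (flag_shift_local f) -shift_rK !g_shift g_local shift_rK.
Qed.

Lemma rot60_rK_commuting : rK_commuting rot60.
Proof.
apply: (rK_commuting_of_local rot60_shift) => i k.
apply: flag_code_inj; rewrite code_rot60 !code_rK code_rot60 /=.
have /all_local/(_ k)/eqP // : all (fun k =>
  rot60_code (rK_code i (0, 0, k)) == rK_code i (rot60_code (0, 0, k))) (iota 0 108).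
by case: i => [|[|i]]; vm_compute.
Qed.

Lemma iter_rK_commuting g j : rK_commuting g -> rK_commuting (iter j g).
Proof. by move=> gK i f; elim: j => [|j IH] //=; rewrite IH gK. Qed.

Definition parity (k : nat) : bool := odd (size (nth [::] local_words k)).

Lemma parity_rK i f : parity (rK i f).2 = ~~ parity f.2.
Proof.
rewrite (flag_shift_local f) -shift_rK /=.
have /(congr1 snd) /= -> := code_rK i (0, 0, f.2).
have /all_local/(_ f.2)/eqP // :
  all (fun k => parity (rK_code i (0, 0, k)).2 == ~~ parity k) (iota 0 108).
by case: i => [|[|i]]; vm_compute.
Qed.

Lemma flag_coloring_parity (c : flagK -> bool) :
  (forall i f, c (rK i f) = ~~ c f) -> forall f, c f = c (local_flag 0) (+) parity f.2.
Proof.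
move=> c_rK; apply: flagK_ind => [i f cf|]; first by rewrite c_rK cf parity_rK addbN.
have -> : parity (local_flag 0).2 = false by rewrite /= inordK.
by rewrite addbF.
Qed.

(* [face_step] moves a flag one step around its face, so a flag lies on the
   hexagon exactly when [face_step] has order 6 on it. *)
Definition face_step (f : flagK) : flagK := rK 0 (rK 1 f).

Definition in_hexagon (f : flagK) : bool :=
  [&& iter 6 face_step f == f, iter 2 face_step f != f & iter 3 face_step f != f].

Lemma in_hexagon_commuting g f : rK_commuting g -> injective g ->
  in_hexagon (g f) = in_hexagon f.
Proof.
move=> gK g_inj.
have g_iter n : g (iter n face_step f) = iter n face_step (g f).
  by elim: n => [|n IH] //=; rewrite /face_step !gK IH.
by rewrite /in_hexagon -!g_iter !(inj_eq g_inj).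
Qed.

Definition face_step_code (c : int * int * nat) := rK_code 0 (rK_code 1 c).

Definition in_hexagon_code (c : int * int * nat) : bool :=
  [&& iter 6 face_step_code c == c, iter 2 face_step_code c != c
    & iter 3 face_step_code c != c].

Lemma code_in_hexagon f : in_hexagon f = in_hexagon_code (flag_code f).
Proof.
have code_iter n : flag_code (iter n face_step f) = iter n face_step_code (flag_code f).
  by elim: n => [|n IH] //=; rewrite /face_step !code_rK IH.
by rewrite /in_hexagon /in_hexagon_code -!code_iter !(inj_eq flag_code_inj).
Qed.

Lemma even_hexagon_flag (k : 'I_108) : in_hexagon (0, 0, k) -> parity k = false ->
  exists2 j, (j < 6)%N & iter j rot60 (local_flag 0) = (0, 0, k).
Proof.
rewrite code_in_hexagon /= => hex_k even_k.
have /all_local/(_ k) : all (fun k => in_hexagon_code (0, 0, k) && ~~ parity k ==>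
    has (fun j => iter j rot60_code (0, 0, 0%N) == (0, 0, k)) (iota 0 6)) (iota 0 108).
  by vm_compute.
rewrite hex_k even_k => /implyP /(_ isT) /hasP [j]; rewrite mem_iota => lt_j /eqP E.
by exists j => //; apply: flag_code_inj; rewrite code_iter_rot60 code_local.
Qed.

Lemma even_autK_shift_rot60 g : rK_commuting g -> injective g ->
  parity (g (local_flag 0)).2 = false ->
  exists v, exists2 j, (j < 6)%N & g =1 shift v \o iter j rot60.
Proof.
move=> gK g_inj even_g; set f := g (local_flag 0).
have shift_inj v : injective (shift v) := can_inj (shiftK v).
have hex_f : in_hexagon (0, 0, f.2).
  rewrite -(in_hexagon_commuting _ (shift_rK_commuting (f.1.1, f.1.2)) (shift_inj _)).
  by rewrite -flag_shift_local in_hexagon_commuting // code_in_hexagon code_local.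
have [j lt_j rot_j] := even_hexagon_flag hex_f even_g.
exists (f.1.1, f.1.2), j => //; apply: rK_commuting_eq => //.
  exact: rK_commuting_comp (shift_rK_commuting _) (iter_rK_commuting _ rot60_rK_commuting).
by rewrite /= rot_j -flag_shift_local.
Qed.

(** * Gamma is a group of translations *)

Definition fixes_cell (g : flagK -> flagK) : Prop :=
  exists f, sameF_K f (g f) \/ sameE_K f (g f).

Lemma free_fixes_cell Gam g : acts_freely_on sameE_K Gam -> acts_freely_on sameF_K Gam ->
  Gam g -> fixes_cell g -> g =1 id.
Proof.
by move=> freeE freeF Gg [f [Ff|Ef]] h; [apply: (freeF g) | apply: (freeE g)] => //; exists f.
Qed.

Lemma sameF_K_walk w f : all (fun i => i < 2)%N w -> sameF_K f (walk w f).
Proof.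
elim: w f => [|i w IH] f /=; first by move=> _; apply: rt_refl.
case/andP=> lt_i2 face_w; apply: rt_trans (IH _ face_w); apply: rt_step.
by case: i lt_i2 => [|[|]] //= _; [left | right].
Qed.

Lemma sameE_K_walk w f : all (fun i => (i == 0) || (i == 2))%N w -> sameE_K f (walk w f).
Proof.
elim: w f => [|i w IH] f /=; first by move=> _; apply: rt_refl.
case/andP=> edge_i edge_w; apply: rt_trans (IH _ edge_w); apply: rt_step.
by case: i edge_i => [|[|[|]]] //= _; [left | right].
Qed.

(* If a face or edge word moves [f0] to [shift d (g f0)], then conjugating by
   the translation [shift c] turns this into a cell fixed by [shift v \o g]. *)
Lemma fixes_cell_witness g (L : int * int -> int * int) w f0 d v c :
  (forall u f, g (shift u f) = shift (L u) (g f)) ->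
  all (fun i => i < 2)%N w || all (fun i => (i == 0) || (i == 2))%N w ->
  walk w f0 = shift d (g f0) -> v + L c = d + c ->
  fixes_cell (shift v \o g).
Proof.
move=> g_shift w_cell walk_f0 Ec; exists (shift c f0).
have -> : (shift v \o g) (shift c f0) = walk w (shift c f0).
  by rewrite /= g_shift shiftD walk_shift walk_f0 shiftD addrC Ec.
by case/orP: w_cell => w_cell; [left; apply: sameF_K_walk | right; apply: sameE_K_walk].
Qed.

Lemma int_divmod (a : int) (m : nat) : (0 < m)%N ->
  exists q (r : nat), a = q * m%:Z + r%:Z /\ (r < m)%N.
Proof.
move=> m_gt0; exists (a %/ m)%Z, `|(a %% m)%Z|%N.
have m_neq0 : m%:Z != 0 by rewrite eqz_nat -lt0n.
have := divz_eq a m; have := modz_ge0 a m_neq0; have := @ltz_pmod a m.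
by lia.
Qed.

Ltac pair_lia := rewrite /turn /= ?addpairE ?opppairE /=; congr pair; lia.

(* The linear part [iter j turn] of [iter j rot60] is a rotation [M ^ j] with
   [det (1 - M ^ j)] equal to 1, 3, 4, 3, 1 for [j = 1, ..., 5]: one witness is
   needed per coset of the image of [1 - M ^ j] in Z^2. *)
Lemma rotation_fixes_cell j (v : int * int) : (0 < j < 6)%N -> fixes_cell (shift v \o iter j rot60).
Proof.
case: v => a b; have g_shift := @iter_rot60_shift j.
case: j g_shift => [|[|[|[|[|[|j]]]]]] g_shift // _.
- apply: (fixes_cell_witness (w := [:: 0; 1]) (f0 := local_flag 0) (d := (0, 0))
    (c := (- b, a + b)) g_shift) => //; [by flag_compute | by pair_lia].
- have [q [r [Eab lt_r3]]] := int_divmod (a - b) (isT : (0 < 3)%N).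
  case: r Eab lt_r3 => [|[|[|r]]] Eab // _.
  + apply: (fixes_cell_witness (w := [:: 0; 1; 0; 1]) (f0 := local_flag 0) (d := (0, 0))
      (c := (q, q + b)) g_shift) => //; [by flag_compute | by pair_lia].
  + apply: (fixes_cell_witness (w := [:: 0; 1]) (f0 := local_flag 96) (d := (1, 0))
      (c := (q, q + b)) g_shift) => //; [by flag_compute | by pair_lia].
  + apply: (fixes_cell_witness (w := [:: 0; 1]) (f0 := shift (1, 0) (local_flag 102))
      (d := (2, 0)) (c := (q, q + b)) g_shift) => //; [by flag_compute | by pair_lia].
- have [q1 [r1 [Ea lt_r1]]] := int_divmod a (isT : (0 < 2)%N).
  have [q2 [r2 [Eb lt_r2]]] := int_divmod b (isT : (0 < 2)%N).
  case: r1 r2 Ea Eb lt_r1 lt_r2 => [|[|r1]] [|[|r2]] Ea Eb // _ _.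
  + apply: (fixes_cell_witness (w := [:: 0; 1; 0; 1; 0; 1]) (f0 := local_flag 0)
      (d := (0, 0)) (c := (q1, q2)) g_shift) => //; [by flag_compute | by pair_lia].
  + apply: (fixes_cell_witness (w := [:: 0; 2]) (f0 := local_flag 68) (d := (0, 1))
      (c := (q1, q2)) g_shift) => //; [by flag_compute | by pair_lia].
  + apply: (fixes_cell_witness (w := [:: 0; 2]) (f0 := local_flag 62) (d := (1, 0))
      (c := (q1, q2)) g_shift) => //; [by flag_compute | by pair_lia].
  + apply: (fixes_cell_witness (w := [:: 0; 2]) (f0 := shift (0, 1) (local_flag 92))
      (d := (1, 1)) (c := (q1, q2)) g_shift) => //; [by flag_compute | by pair_lia].
- have [q [r [Eab lt_r3]]] := int_divmod (a - b) (isT : (0 < 3)%N).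
  case: r Eab lt_r3 => [|[|[|r]]] Eab // _.
  + apply: (fixes_cell_witness (w := [:: 1; 0; 1; 0]) (f0 := local_flag 0) (d := (0, 0))
      (c := (b + 2 * q, - q)) g_shift) => //; [by flag_compute | by pair_lia].
  + apply: (fixes_cell_witness (w := [:: 1; 0]) (f0 := shift (1, -1) (local_flag 102))
      (d := (1, 0)) (c := (b + 2 * q, - q)) g_shift) => //; [by flag_compute | by pair_lia].
  + apply: (fixes_cell_witness (w := [:: 1; 0]) (f0 := shift (1, -1) (local_flag 96))
      (d := (2, 0)) (c := (b + 2 * q, - q)) g_shift) => //; [by flag_compute | by pair_lia].
- apply: (fixes_cell_witness (w := [:: 1; 0]) (f0 := local_flag 0) (d := (0, 0))
    (c := (a + b, - a)) g_shift) => //; [by flag_compute | by pair_lia].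
Qed.

Lemma quotient_coloring_parity Gam X eta g : is_quotient_of_K Gam X eta -> orientable X ->
  Gam g -> parity (g (local_flag 0)).2 = false.
Proof.
case=> _ [eta0 [eta1 [eta2 eta_eq]]] [col col_flip] Gg.
pose c f := col (eta f).
have neq_negb (a b : bool) : a != b -> a = ~~ b by case: a; case: b.
have c_rK i f : c (rK i f) = ~~ c f.
  case: (col_flip (eta f)) => /neq_negb flip0 /neq_negb flip1 /neq_negb flip2.
  by rewrite /c; case: i => [|[|i]] /=; rewrite ?eta0 ?eta1 ?eta2.
have c_g : c (g (local_flag 0)) = c (local_flag 0).
  by rewrite /c; congr col; apply/esym/eta_eq; exists g.
have := flag_coloring_parity c_rK (g (local_flag 0)); rewrite c_g.
by case: (c _); case: (parity _).
Qed.

Lemma quotient_group_translations Gam X eta :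
  subgroup_AutK Gam -> acts_freely_on sameE_K Gam -> acts_freely_on sameF_K Gam ->
  is_quotient_of_K Gam X eta -> orientable X ->
  forall g, Gam g -> exists v, g =1 shift v.
Proof.
move=> [Gam_aut _] freeE freeF quotX orX g Gg.
have [g_bij _] := Gam_aut g Gg; have gK := autK_rK_commuting (Gam_aut g Gg).
have [v [j lt_j6 Eg]] := even_autK_shift_rot60 gK (bij_inj g_bij)
  (quotient_coloring_parity quotX orX Gg).
case: j lt_j6 Eg => [|j] lt_j6 Eg; first by exists v.
exists (0, 0) => f; rewrite shift0; apply: (free_fixes_cell freeE freeF Gg).
by have [f0 fix_f0] := rotation_fixes_cell v (lt_j6 : (0 < j.+1 < 6)%N); exists f0; rewrite !Eg.
Qed.

(** * Automorphisms of the quotient and its vertex orbits *)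

Definition normalizes (Gam : (flagK -> flagK) -> Prop) (A : flagK -> flagK) : Prop :=
  forall h, Gam h -> exists2 h', Gam h' & forall f, A (h f) = h' (A f).

Lemma quotient_lift_aut Gam X eta (A B : flagK -> flagK) :
  is_quotient_of_K Gam X eta -> rK_commuting A -> cancel A B ->
  normalizes Gam A -> normalizes Gam B ->
  exists2 p : {perm fl X}, p \in AutX X & forall f, p (eta f) = eta (A f).
Proof.
case=> eta_onto [eta0 [eta1 [eta2 eta_eq]]] AK AB nA nB.
have eta_onto' y : exists f, eta f == y by have [f <-] := eta_onto y; exists f.
pose sec y := xchoose (eta_onto' y).
have secK y : eta (sec y) = y := eqP (xchooseP (eta_onto' y)).
have descend C : normalizes Gam C -> forall f, eta (C (sec (eta f))) = eta (C f).
  move=> nC f; have [h [Gh hf]] := proj1 (eta_eq _ _) (secK (eta f)).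
  have [h' Gh' Ch] := nC h Gh.
  by apply/eta_eq; exists h'; rewrite -Ch hf.
pose pA y := eta (A (sec y)); pose pB y := eta (B (sec y)).
have pAK : cancel pA pB by move=> y; rewrite /pB /pA descend // AB secK.
exists (perm (can_inj pAK)); last by move=> f; rewrite permE /pA descend.
rewrite inE; apply/forallP => y; rewrite !permE; have [f <-] := eta_onto y.
by rewrite /pA -eta0 -eta1 -eta2 !descend // (AK 0) (AK 1) (AK 2) eta0 eta1 eta2 !eqxx.
Qed.

Lemma AutX_group_set X : group_set (AutX X).
Proof.
apply/group_setP; split=> [|p q]; first by rewrite inE; apply/forallP => x; rewrite !perm1 !eqxx.
rewrite !inE => /forallP pX /forallP qX; apply/forallP => x; rewrite !permM.
by case/and3P: (pX x) => /eqP-> /eqP-> /eqP->; apply: qX.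
Qed.

Canonical AutX_group X := group (AutX_group_set X).

Lemma connect_homo (T : finType) (e : rel T) (h : T -> T) :
  {homo h : x y / e x y} -> {homo h : x y / connect e x y}.
Proof.
move=> he x y /connectP [s xs ->]; elim: s x xs => [|z s IH] x /=; first by rewrite connect0.
by case/andP=> /he exz /IH; apply: connect_trans (connect1 exz).
Qed.

Lemma AutX_vrel X (p : {perm fl X}) u v : p \in AutX X -> vrel (p u) (p v) = vrel u v.
Proof.
rewrite inE => /forallP/(_ u)/and3P [_ /eqP p1 /eqP p2].
by rewrite /vrel -p1 -p2 !(inj_eq perm_inj).
Qed.

Lemma AutX_connect_vrel X (p : {perm fl X}) x y : p \in AutX X ->
  connect (@vrel X) (p x) (p y) = connect (@vrel X) x y.
Proof.
have homo q : q \in AutX X -> {homo q : u v / connect (@vrel X) u v}.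
  by move=> qX; apply: connect_homo => u v; rewrite AutX_vrel.
move=> pX; apply/idP/idP; last exact: homo.
by move/(homo _ (groupVr pX)); rewrite !permK.
Qed.

Lemma vertex_of_AutX X (p : {perm fl X}) x : p \in AutX X ->
  [set p z | z in vertex_of x] = vertex_of (p x).
Proof.
move=> pX; apply/setP => z.
by rewrite -[z](permKV p) mem_imset ?inE ?AutX_connect_vrel //; apply: perm_inj.
Qed.

Lemma vorbit_AutX X (p : {perm fl X}) x : p \in AutX X ->
  vorbit (vertex_of (p x)) = vorbit (vertex_of x).
Proof.
by move=> pX; rewrite -vertex_of_AutX //; apply: (orbit_act 'P^* (G := AutX_group X)).
Qed.

Lemma vertex_of_vrel X (x y : fl X) : involutive (@s1 X) -> involutive (@s2 X) ->
  vrel x y -> vertex_of y = vertex_of x.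
Proof.
move=> s1K s2K xy.
have vrel_sym : forall u v : fl X, vrel u v = vrel v u.
  move=> u v; rewrite /vrel -(inj_eq (inv_inj s1K)) -[v == s2 u](inj_eq (inv_inj s2K)).
  by rewrite s1K s2K !(eq_sym u).
apply/setP => z; rewrite !inE.
by rewrite (same_connect (sym_connect_sym vrel_sym) (connect1 xy)).
Qed.

Lemma shift_commute u v : shift u \o shift v =1 shift v \o shift u.
Proof. by move=> f /=; rewrite !shiftD addrC. Qed.

Lemma shift_cancel u v : cancel (shift v) (shift u) -> u = - v.
Proof.
case: u v => [a b] [c d] /(_ (local_flag 0)).
by rewrite shiftD /shift /= => -[E1 E2]; pair_lia.
Qed.

Notation rot180 := (iter 3 rot60).

Lemma rot180_shift v f : rot180 (shift v f) = shift (- v) (rot180 f).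
Proof. by rewrite iter_rot60_shift; congr shift; case: v => a b; pair_lia. Qed.

Lemma rot180_involutive : involutive rot180.
Proof.
have rot180_commuting := iter_rK_commuting 3 rot60_rK_commuting.
apply: (rK_commuting_eq (g := rot180 \o rot180) (h := id)) => //.
  exact: (rK_commuting_comp rot180_commuting rot180_commuting).
by flag_compute.
Qed.

Section Translations.

Variable Gam : (flagK -> flagK) -> Prop.
Hypothesis Gam_transl : forall g, Gam g -> exists v, g =1 shift v.

Lemma shift_normalizes v : normalizes Gam (shift v).
Proof.
move=> h Gh; exists h => // f; have [u Eh] := Gam_transl Gh.
by rewrite !Eh; apply: shift_commute.
Qed.

Lemma rot180_normalizes : (forall g, Gam g -> exists2 g', Gam g' & cancel g g') ->
  normalizes Gam rot180.
Proof.
move=> Gam_inv h Gh; have [h' Gh' hK] := Gam_inv h Gh; exists h' => // f.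
have [u Eh] := Gam_transl Gh; have [u' Eh'] := Gam_transl Gh'.
have u'E : u' = - u by apply: shift_cancel => g; rewrite -Eh -Eh' hK.
by rewrite Eh Eh' u'E rot180_shift.
Qed.

End Translations.

Definition vertex_words : seq (seq nat) :=
[::
  [::]; [:: 1]; [::]; [:: 1]; [::]; [:: 1]; [:: 3]; [:: 3; 1]; [:: 3]; [:: 3; 1]; [:: 3];
  [:: 3; 1]; [:: 2]; [:: 1; 2]; [:: 1; 2; 1]; [:: 2; 1]; [::]; [:: 1]; [::]; [:: 1];
  [:: 2]; [:: 1; 2]; [:: 1; 2; 1]; [:: 2; 1]; [::]; [:: 1]; [:: 3; 1; 2; 1; 2];
  [:: 3; 2; 1; 2]; [:: 2]; [:: 1; 2]; [:: 3; 1; 2; 1]; [:: 3; 2; 1]; [:: 2; 1; 2; 1];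
  [:: 1; 2; 1; 2; 1]; [:: 3; 1; 2; 1; 2]; [:: 3; 2; 1; 2]; [:: 3; 2]; [:: 3; 1; 2];
  [:: 3; 1; 2; 1]; [:: 3; 2; 1]; [:: 3]; [:: 3; 1]; [:: 3]; [:: 3; 1]; [:: 3; 2];
  [:: 3; 1; 2]; [:: 3; 1; 2; 1]; [:: 3; 2; 1]; [:: 3]; [:: 3; 1]; [:: 1; 2; 1; 2];
  [:: 2; 1; 2]; [:: 3; 2]; [:: 3; 1; 2]; [:: 1; 2; 1]; [:: 2; 1]; [:: 3; 2; 1; 2; 1];
  [:: 3; 1; 2; 1; 2; 1]; [:: 1; 2; 1; 2]; [:: 2; 1; 2]; [:: 2; 1; 2]; [:: 2; 1; 2; 1];
  [:: 1; 2]; [:: 2]; [:: 3; 1; 2; 1; 2]; [:: 3; 2; 1; 2]; [:: 2; 1; 2]; [:: 2; 1; 2; 1];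
  [:: 3; 2; 1; 2; 1]; [:: 3; 1; 2; 1; 2; 1]; [:: 2; 1]; [:: 1; 2; 1]; [:: 2; 1; 2];
  [:: 2; 1; 2; 1]; [:: 3; 2; 1; 2; 1]; [:: 3; 1; 2; 1; 2; 1]; [:: 2; 1]; [:: 1; 2; 1];
  [:: 3; 2; 1; 2]; [:: 3; 2; 1; 2; 1]; [:: 3; 1; 2]; [:: 3; 2]; [:: 1; 2; 1; 2];
  [:: 2; 1; 2]; [:: 3; 2; 1; 2]; [:: 3; 2; 1; 2; 1]; [:: 2; 1; 2; 1]; [:: 1; 2; 1; 2; 1];
  [:: 3; 2; 1]; [:: 3; 1; 2; 1]; [:: 3; 2; 1; 2]; [:: 3; 2; 1; 2; 1]; [:: 2; 1; 2; 1];
  [:: 1; 2; 1; 2; 1]; [:: 3; 2; 1]; [:: 3; 1; 2; 1]; [:: 1; 2; 1]; [:: 2; 1]; [:: 3; 2];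
  [:: 3; 1; 2]; [:: 2]; [:: 1; 2]; [:: 3; 2]; [:: 3; 1; 2]; [:: 3; 1; 2; 1]; [:: 3; 2; 1];
  [:: 2]; [:: 1; 2] ].

Definition vertex_reps : seq nat := [:: 0; 2; 4; 16; 18; 24].

Definition vertex_step (c : nat) : flagK -> flagK :=
  match c with 1%N => r1K | 2%N => r2K | _ => rot180 end.

Definition vertex_walk (w : seq nat) (f : flagK) : flagK :=
  foldl (fun f c => vertex_step c f) f w.

Definition vertex_step_code (c : nat) : int * int * nat -> int * int * nat :=
  match c with 1%N => rK_code 1 | 2%N => rK_code 2 | _ => iter 3 rot60_code end.

Lemma code_vertex_walk w f :
  flag_code (vertex_walk w f) = foldl (fun c i => vertex_step_code i c) (flag_code f) w.
Proof.
elim: w f => [|i w IH] f //=; rewrite IH; congr foldl.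
by case: i => [|[|[|i]]] /=; rewrite ?code_rot60 ?(code_rK 1) ?(code_rK 2).
Qed.

Lemma vertex_class_reps (T : Type) (cls : flagK -> T) :
  (forall f, cls (r1K f) = cls f) -> (forall f, cls (r2K f) = cls f) ->
  (forall f, cls (rot180 f) = cls f) -> (forall v f, cls (shift v f) = cls f) ->
  forall f, exists2 r, r \in vertex_reps & cls f = cls (local_flag r).
Proof.
move=> cls1 cls2 cls180 cls_shift f.
have cls_walk w g : cls (vertex_walk w g) = cls g.
  by elim: w g => [|[|[|[|i]]] w IH] g //=; rewrite IH ?cls1 ?cls2 ?cls180.
rewrite (flag_shift_local f) cls_shift -(cls_walk (nth [::] vertex_words f.2)).
set g := vertex_walk _ _; exists (val g.2).
  have /all_local/(_ f.2) : all (fun k => (foldl (fun c i => vertex_step_code i c) (0, 0, k)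
      (nth [::] vertex_words k)).2 \in vertex_reps) (iota 0 108) by vm_compute.
  by rewrite -[val g.2]/(flag_code g).2 code_vertex_walk.
rewrite (flag_shift_local g) cls_shift; congr cls; congr (_, _, _).
by apply: val_inj; rewrite /= inordK.
Qed.

Lemma quotient_involutive Gam X eta : is_quotient_of_K Gam X eta ->
  involutive (@s1 X) /\ involutive (@s2 X).
Proof.
case=> eta_onto [_ [eta1 [eta2 _]]]; split=> y; have [f <-] := eta_onto y.
  by rewrite -!eta1 (rK_involutive 1 f : r1K (r1K f) = f).
by rewrite -!eta2 (rK_involutive 2 f : r2K (r2K f) = f).
Qed.

Lemma quotient_vertex_orbit_reps Gam X eta : is_quotient_of_K Gam X eta ->
  (forall g, Gam g -> exists v, g =1 shift v) ->
  (forall g, Gam g -> exists2 g', Gam g' & cancel g g') ->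
  forall f, exists2 r, r \in vertex_reps &
    vorbit (vertex_of (eta f)) = vorbit (vertex_of (eta (local_flag r))).
Proof.
move=> quotX Gam_transl Gam_inv.
have [s1K s2K] := quotient_involutive quotX.
have [_ [_ [eta1 [eta2 _]]]] := quotX.
pose cls f := vorbit (vertex_of (eta f)).
have cls_lift A B : rK_commuting A -> cancel A B -> normalizes Gam A -> normalizes Gam B ->
    forall f, cls (A f) = cls f.
  move=> AK AB nA nB f; have [p pX Ep] := quotient_lift_aut quotX AK AB nA nB.
  by rewrite /cls -Ep vorbit_AutX.
have cls_r1 f : cls (r1K f) = cls f.
  by rewrite /cls eta1 (@vertex_of_vrel _ (eta f)) // /vrel eqxx.
have cls_r2 f : cls (r2K f) = cls f.
  by rewrite /cls eta2 (@vertex_of_vrel _ (eta f)) // /vrel eqxx orbT.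
have rot180_norm := rot180_normalizes Gam_transl Gam_inv.
have cls_rot180 := cls_lift _ _ (iter_rK_commuting 3 rot60_rK_commuting)
  rot180_involutive rot180_norm rot180_norm.
have cls_shift v := cls_lift _ _ (shift_rK_commuting v) (shiftK v)
  (shift_normalizes Gam_transl v) (shift_normalizes Gam_transl (- v)).
exact: vertex_class_reps cls_r1 cls_r2 cls_rot180 cls_shift.
Qed.

Lemma n_vertex_orbits_le X (reps : seq (fl X)) :
  (forall x, exists2 y, y \in reps & vorbit (vertex_of x) = vorbit (vertex_of y)) ->
  (n_vertex_orbits X <= size reps)%N.
Proof.
move=> reps_cover; rewrite -(size_map (fun y => vorbit (vertex_of y)) reps).
apply: leq_trans (card_size _); apply/subset_leq_card/subsetP.
move=> _ /imsetP [_ /imsetP [x _ ->] ->].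
by have [y y_rep ->] := reps_cover x; apply: (map_f (fun y => vorbit (vertex_of y))).
Qed.

Theorem theorem1 (Gam : (flagK -> flagK) -> Prop) (X : fmap)
    (eta : flagK -> fl X) :
  subgroup_AutK Gam ->
  acts_freely_on sameV_K Gam ->
  acts_freely_on sameE_K Gam ->
  acts_freely_on sameF_K Gam ->
  is_quotient_of_K Gam X eta ->
  on_torus X ->
  polyhedral X ->
  (n_vertex_orbits X <= 6)%N.
Proof.
move=> GamAut _ freeE freeF quotX [_ [orX _]] _.
have Gam_transl := quotient_group_translations GamAut freeE freeF quotX orX.
have Gam_inv g : Gam g -> exists2 g', Gam g' & cancel g g'.
  by case: GamAut => _ [_ [_ Ginv]] /Ginv [g' [Gg' [gK _]]]; exists g'.
have reps := quotient_vertex_orbit_reps quotX Gam_transl Gam_inv.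
rewrite -[6%N]/(size vertex_reps) -(size_map (eta \o local_flag)).
apply: n_vertex_orbits_le => x.
have [f <-] := proj1 quotX x; have [r r_rep ->] := reps f.
by exists (eta (local_flag r)); first exact: map_f.
Qed.
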